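(* Let $k\ge 3$ be an integer. Then the $(6k^2-6k-1)$-fan $F_{6k^2-6k-1}$ satisfies $\mathrm{ecrw}(F_{6k^2-6k-1})\ge k$.
   Context: The $n$-fan $F_n$ is the graph obtained from the path on $n$ vertices by adding one new vertex adjacent to all vertices of the path. A tree-cut decomposition of a graph $G$ is a pair $\mathcal{T}=(T,\{X_t\}_{t\in V(T)})$ where $T$ is a tree and the bags $X_t\subseteq V(G)$ are pairwise disjoint (possibly empty) with $\bigcup_{t\in V(T)}X_t=V(G)$. For a node $t$ of $T$, let $T_1,\dots,T_m$ be the connected components of $T-t$ and $Z_i=\bigcup_{s\in V(T_i)}X_s$; $\mathrm{cross}_{\mathcal{T}}(t)$ is the number of edges of $G$ whose two endpoints lie in two distinct sets among $Z_1,\dots,Z_m$ (if $T$ has one node, $\mathrm{cross}_{\mathcal T}(t)=0$). The crossing number of $\mathcal{T}$ is $\max_{t}\mathrm{cross}_{\mathcal{T}}(t)$, and the thickness of $\mathcal{T}$ is $\max_t|X_t|$. The edge-crossing width of $\mathcal T$ is the maximum of its crossing number and its thickness, and $\mathrm{ecrw}(G)$ is the minimum edge-crossing width over all tree-cut decompositions of $G$. *)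

From mathcomp Require Import all_boot.
Set Implicit Arguments. Unset Strict Implicit. Unset Printing Implicit Defensive.

Definition simple_graph (V : finType) (g : rel V) : Prop :=
  symmetric g /\ irreflexive g.

(* The n-fan F_n: path vertices 0,...,n-1 (i ~ i+1), plus apex vertex n
   adjacent to all path vertices. Vertex type 'I_n.+1. *)
Definition fan_rel (n : nat) : rel 'I_n.+1 :=
  fun u v => (u != v) &&
    [|| (u == n :> nat), (v == n :> nat), (u.+1 == v :> nat) | (v.+1 == u :> nat)].

Arguments fan_rel n : clear implicits.

Definition is_tree (T : finType) (e : rel T) : Prop :=
  [/\ symmetric e, irreflexive e, (0 < #|T|)%N,
      (forall x y, connect e x y) &
      (forall u v, e u v ->
         ~~ connect (fun a b => e a b && ~~ ((a == u) && (b == v) || (a == v) && (b == u))) u v)].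

Record tcd (V : finType) (g : rel V) := TCD {
  tnode : finType;
  tedge : rel tnode;
  bag : tnode -> {set V};
  tcd_tree : is_tree tedge;
  tcd_disj : forall s t, s != t -> [disjoint bag s & bag t];
  tcd_cover : forall v, exists t, v \in bag t
}.

Definition same_comp V g (D : @tcd V g) (t s1 s2 : tnode D) : bool :=
  connect (fun a b => tedge a b && (a != t) && (b != t)) s1 s2.

Definition crosses_at V g (D : @tcd V g) (t : tnode D) (u v : V) : bool :=
  [exists s1, exists s2,
     [&& u \in bag s1, v \in bag s2, s1 != t, s2 != t & ~~ same_comp t s1 s2]].

Definition cross V g (D : @tcd V g) (t : tnode D) : nat :=
  #|[set E : {set V} | [exists u, exists v,
        [&& E == [set u; v], g u v & crosses_at t u v]]]|.

Definition ecw V g (D : @tcd V g) : nat :=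
  \max_(t : tnode D) maxn (cross t) #|@bag _ _ D t|.

Definition ecrw_ge (V : finType) (g : rel V) (k : nat) : Prop :=
  forall D : @tcd V g, (k <= ecw D)%N.

From mathcomp Require Import all_boot zify.
Set Implicit Arguments. Unset Strict Implicit. Unset Printing Implicit Defensive.

(* Write K = k - 1 and suppose a tree-cut decomposition D of F_n has
   crossing number and thickness at most K.  Let the root be the node whose
   bag holds the apex.  For a neighbour t of the root, the branch at t (path
   vertices whose nodes lie in the component of t in T - root) has at most 2K
   vertices: those outside the bag of t are separated from the apex by t, so
   their apex edges cross at t.  Call the path edge {i, i+1} a break when an
   end lies in the root bag or the edge crosses at the root; there are at most
   3K breaks.  Between breaks the path stays in a single branch, so every
   window of 2K+1 consecutive path vertices contains a break; as
   n >= (3K+1)(2K+1) there are 3K+1 disjoint windows, a contradiction. *)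

Definition avoid (T : finType) (e : rel T) (t : T) : rel T :=
  fun a b => e a b && (a != t) && (b != t).

Lemma avoid_connect_sym (T : finType) (e : rel T) (t : T) :
  symmetric e -> connect_sym (avoid e t).
Proof.
by move=> sym; apply: sym_connect_sym => a b; rewrite /avoid sym andbAC andbC andbA.
Qed.

Lemma last_step_neighbour (T : finType) (e : rel T) (P : pred T) (ta s : T) :
  connect (fun a b => e a b && P a && P b) s ta -> s != ta ->
  exists2 t', e t' ta & P t' && connect (avoid e ta) s t'.
Proof.
move/connectP=> [p]; elim: p s => [|x p IH] s /=; first by move=> _ ->; rewrite eqxx.
move=> /andP[/andP[/andP[esx Ps] _] walk] last_x s_ta.
have [x_ta'|x_ta] := eqVneq x ta; first by exists s; rewrite -?x_ta' ?Ps ?connect0.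
have [t' et't /andP[Pt' x_t']] := IH x walk last_x x_ta.
exists t' => //; rewrite Pt' /=; apply: connect_trans x_t'.
by apply: connect1; rewrite /avoid esx s_ta x_ta.
Qed.

Lemma tree_neighbours_separated (T : finType) (e : rel T) (ta t t' : T) :
  is_tree e -> e t ta -> e t' ta -> t != t' -> ~~ connect (avoid e ta) t t'.
Proof.
case=> _ irr _ _ minimal ett ett' t_t'; apply/negP => c.
have t'_ta : t' != ta by apply: contraTneq ett' => ->; rewrite irr.
have := minimal t ta ett; apply/negP/negPn; apply: connect_trans (_ : connect _ t' ta).
  apply: connect_sub c => x y /andP[/andP[exy x_ta] y_ta]; apply: connect1.
  by rewrite exy (negbTE y_ta) (negbTE x_ta) !andbF.
by apply: connect1; rewrite ett' (eq_sym t') (negbTE t_t') (negbTE t'_ta).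
Qed.

Lemma component_neighbour (T : finType) (e : rel T) (ta s : T) :
  is_tree e -> s != ta -> exists2 t, e t ta & connect (avoid e ta) s t.
Proof.
case=> _ _ _ conn _ s_ta.
have walk : connect (fun a b => e a b && predT a && predT b) s ta.
  by apply: connect_sub (conn s ta) => x y exy; apply: connect1; rewrite exy.
by have [t ett /andP[_ c]] := last_step_neighbour walk s_ta; exists t.
Qed.

Lemma tree_branch_separated (T : finType) (e : rel T) (ta t s : T) :
  is_tree e -> e t ta -> s != ta -> connect (avoid e ta) s t ->
  ~~ connect (avoid e t) s ta.
Proof.
move=> tree ett s_ta s_t; apply/negP => c.
have [sym _ _ _ _] := tree.
have [t' et't /andP[t'_t s_t']] := last_step_neighbour c s_ta.
have t_t' : t != t' by rewrite eq_sym.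
have := tree_neighbours_separated tree ett et't t_t'; apply/negP/negPn.
by apply: connect_trans s_t'; rewrite (avoid_connect_sym ta sym).
Qed.

Section Decomposition.
Variables (V : finType) (g : rel V) (D : tcd g).

(* The node whose bag contains [v]; as the bags partition [V] it is unique. *)
Definition node_of (v : V) : tnode D := xchoose (tcd_cover D v).

Lemma node_ofE (v : V) (t : tnode D) : (node_of v == t) = (v \in bag t).
Proof.
have v_node : v \in bag (node_of v) := xchooseP (tcd_cover D v).
apply/eqP/idP => [<- //|v_t]; apply/eqP/negPn/negP => ne.
by have := disjointFr (tcd_disj ne) v_node; rewrite v_t.
Qed.

Lemma node_ofN (v : V) (t : tnode D) : (node_of v != t) = (v \notin bag t).
Proof. by rewrite node_ofE. Qed.

Lemma same_comp_sym (t s1 s2 : tnode D) : same_comp t s1 s2 = same_comp t s2 s1.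
Proof. by have [sym _ _ _ _] := tcd_tree D; apply: (avoid_connect_sym t sym). Qed.

Lemma crosses_atE (t : tnode D) (u v : V) :
  crosses_at t u v =
  [&& node_of u != t, node_of v != t & ~~ same_comp t (node_of u) (node_of v)].
Proof.
apply/existsP/and3P => [[s1 /existsP[s2 /and5P[u_s1 v_s2 s1_t s2_t sep]]]|].
  by rewrite -!node_ofE in u_s1 v_s2; rewrite (eqP u_s1) (eqP v_s2) s1_t s2_t.
move=> [u_t v_t sep]; exists (node_of u); apply/existsP.
by exists (node_of v); rewrite -!node_ofE !eqxx u_t v_t sep.
Qed.

Lemma card_le_cross (t : tnode D) (X : finType) (A : {set X}) (u v : X -> V) :
  {in A &, injective (fun x => [set u x; v x])} ->
  (forall x, x \in A -> g (u x) (v x) && crosses_at t (u x) (v x)) ->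
  #|A| <= cross t.
Proof.
move=> inj edges; rewrite -(card_in_imset inj); apply: subset_leq_card.
apply/subsetP => E /imsetP[x xA ->]; rewrite inE.
by apply/existsP; exists (u x); apply/existsP; exists (v x); rewrite eqxx edges.
Qed.

Lemma cross_le_ecw (t : tnode D) : cross t <= ecw D.
Proof.
apply: leq_trans (leq_maxl _ #|bag t|) _.
exact: (@leq_bigmax _ (fun s => maxn (cross s) #|@bag _ _ D s|) t).
Qed.

Lemma bag_le_ecw (t : tnode D) : #|bag t| <= ecw D.
Proof.
apply: leq_trans (leq_maxr (cross t) _) _.
exact: (@leq_bigmax _ (fun s => maxn (cross s) #|@bag _ _ D s|) t).
Qed.

End Decomposition.

Lemma range_le_card (T : finType) (A : {set T}) (f : T -> nat) (m : nat) :
  (forall j, j < m -> exists2 x, x \in A & f x = j) -> m <= #|A|.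
Proof.
move=> onto; rewrite cardE -(size_map f) -(size_iota 0 m).
apply: uniq_leq_size (iota_uniq 0 m) _ => j; rewrite mem_iota add0n => /onto[x xA <-].
by apply: map_f; rewrite mem_enum.
Qed.

Definition fan_vtx (n i : nat) : 'I_n.+1 := inord i.

Lemma fan_vtxK (n i : nat) : i <= n -> fan_vtx n i = i :> nat.
Proof. exact: inordK. Qed.

Lemma fan_apex_edge (n : nat) (v : 'I_n.+1) : v != ord_max -> fan_rel n ord_max v.
Proof. by move=> v_apex; rewrite /fan_rel eq_sym v_apex eqxx. Qed.

Lemma fan_path_edge (n i : nat) : i < n -> fan_rel n (fan_vtx n i) (fan_vtx n i.+1).
Proof.
move=> i_n; have i_le : i <= n := ltnW i_n.
rewrite /fan_rel !fan_vtxK // eqxx !orbT andbT.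
by apply/eqP => /(congr1 val); rewrite /= !fan_vtxK //; lia.
Qed.

Lemma fan_path_edge_inj (n : nat) (A : {set 'I_n.+1}) :
  (forall i, i \in A -> i < n) ->
  {in A &, injective (fun i : 'I_n.+1 => [set fan_vtx n i; fan_vtx n i.+1])}.
Proof.
move=> in_path i j /in_path i_n /in_path j_n E; apply: val_inj => /=.
have h1 : fan_vtx n i \in [set fan_vtx n j; fan_vtx n j.+1] by rewrite -E set21.
have h2 : fan_vtx n j \in [set fan_vtx n i; fan_vtx n i.+1] by rewrite E set21.
move: h1 h2; rewrite !in_set2 => /orP[] /eqP/(congr1 val) h1 /orP[] /eqP/(congr1 val) h2;
  move: h1 h2; rewrite /= !fan_vtxK; lia.
Qed.

Section FanWidth.
Variables (n K : nat) (D : tcd (fan_rel n)).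
Hypothesis width_le : ecw D <= K.

Let cross_le (t : tnode D) : cross t <= K := leq_trans (cross_le_ecw t) width_le.
Let bag_le (t : tnode D) : #|bag t| <= K := leq_trans (bag_le_ecw t) width_le.

Local Notation apex := (@ord_max n).
Local Notation node := (node_of D).
Local Notation vtx := (fan_vtx n).
Local Notation root := (node apex).

(* The root bag is nonempty, hence [K > 0]. *)
Let K_gt0 : 0 < K.
Proof.
apply: leq_trans (bag_le root); rewrite card_gt0; apply/set0Pn.
by exists apex; rewrite -node_ofE.
Qed.

Definition branch (t : tnode D) : {set 'I_n.+1} :=
  [set v | (node v != root) && same_comp root (node v) t].

(* A branch holds at most [2K] vertices: those outside the bag of [t] are
   separated from the apex by [t], so their apex edges all cross at [t]. *)
Lemma branch_bound (t : tnode D) : tedge t root -> #|branch t| <= K + K.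
Proof.
move=> t_root; have tree := tcd_tree D; have [_ irr _ _ _] := tree.
have root_t : root != t by apply: contraTneq t_root => <-; rewrite irr.
pose W := [set v | (v != apex) && ~~ same_comp t (node v) root && (node v != t)].
have W_le : #|W| <= K.
  apply: leq_trans (cross_le t); apply: (card_le_cross (u := fun=> apex) (v := id)).
    move=> v w; rewrite !inE => /andP[/andP[v_apex _] _] /andP[/andP[w_apex _] _] E.
    have : v \in [set apex; w] by rewrite -E set22.
    by rewrite in_set2 (negbTE v_apex) => /eqP.
  move=> v; rewrite inE => /andP[/andP[v_apex sep] v_t].
  by rewrite fan_apex_edge // crosses_atE root_t v_t same_comp_sym.
have sub : branch t \subset bag t :|: W.
  apply/subsetP => v; rewrite !inE => /andP[v_root v_t_comp].
  case v_t: (v \in bag t) => //=; rewrite node_ofN v_t andbT.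
  have -> : v != apex by apply: contra_neq v_root => ->.
  exact: tree_branch_separated tree t_root v_root v_t_comp.
apply: leq_trans (subset_leq_card sub) _; apply: leq_trans (leq_card_setU _ _).1 _.
exact: leq_add (bag_le t) W_le.
Qed.

Definition break (i : nat) : bool :=
  [|| vtx i \in bag root, vtx i.+1 \in bag root | crosses_at root (vtx i) (vtx i.+1)].

Definition breaks : {set 'I_n.+1} := [set i : 'I_n.+1 | (i.+1 < n) && break i].

(* Each kind of break is bounded by the thickness or the crossing number at
   the root. *)
Lemma breaks_bound : #|breaks| <= K + K + K.
Proof.
pose B1 := [set i : 'I_n.+1 | (i.+1 < n) && (vtx i.+1 \in bag root)].
pose B2 := [set i : 'I_n.+1 | (i.+1 < n) && crosses_at root (vtx i) (vtx i.+1)].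
have sub : breaks \subset bag root :|: B1 :|: B2.
  apply/subsetP => i; rewrite !inE /break => /andP[i_n].
  have -> : vtx i = i by apply: val_inj; rewrite /= fan_vtxK // ltnW // ltnW.
  by rewrite i_n /=; case/or3P => ->; rewrite ?orbT.
have B1_le : #|B1| <= K.
  apply: leq_trans (bag_le root).
  have inj : {in B1 &, injective (fun i : 'I_n.+1 => vtx i.+1)}.
    move=> i j; rewrite !inE => /andP[i_n _] /andP[j_n _] /(congr1 val) E.
    by apply: val_inj; move: E; rewrite /= !fan_vtxK; lia.
  rewrite -(card_in_imset inj); apply: subset_leq_card.
  by apply/subsetP => v /imsetP[i]; rewrite inE => /andP[_ ?] ->.
have B2_le : #|B2| <= K.
  apply: leq_trans (cross_le root).
  apply: (card_le_cross (u := fun i : 'I_n.+1 => vtx i) (v := fun i => vtx i.+1)).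
    by apply: fan_path_edge_inj => i; rewrite inE => /andP[/ltnW].
  by move=> i; rewrite inE => /andP[i_n ->]; rewrite fan_path_edge // ltnW.
apply: leq_trans (subset_leq_card sub) _.
apply: leq_trans (leq_card_setU _ _).1 (leq_add _ B2_le).
exact: leq_trans (leq_card_setU _ _).1 (leq_add (bag_le root) B1_le).
Qed.

Lemma run_in_component (m r : nat) : 0 < r -> (forall q, q < r -> ~~ break (m + q)) ->
  forall q, q <= r ->
  (vtx (m + q) \notin bag root) && same_comp root (node (vtx m)) (node (vtx (m + q))).
Proof.
move=> r_gt0 no_break; elim=> [|q IH] q_le.
  have := no_break 0 r_gt0; rewrite addn0 /break !negb_or.
  by case/and3P=> out_m _ _; rewrite out_m; apply: connect0.
have /andP[_ comp_q] := IH (ltnW q_le).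
have := no_break q q_le; rewrite /break !negb_or crosses_atE !node_ofN.
move=> /and3P[out_q out_q1]; rewrite out_q out_q1 negbK /= addnS => step.
by rewrite out_q1; apply: connect_trans step.
Qed.

(* Every window of [2K+1] consecutive path vertices contains a break, since
   otherwise the whole window would lie in a single branch. *)
Lemma window_has_break (j : nat) : j.+1 * (2 * K + 1) <= n ->
  [exists i in breaks, i %/ (2 * K + 1) == j].
Proof.
move=> window_le; apply: contraT => /exists_inPn no_break_in.
set L := 2 * K + 1 in window_le no_break_in; set m := j * L.
have no_break q : q < 2 * K -> ~~ break (m + q).
  move=> q_lt; have mq_n : (m + q).+1 < n by rewrite /m mulSn /L in window_le *; lia.
  have window_q : (m + q) %/ L = j by rewrite /m divnMDl ?divn_small /L; lia.
  have mq_lt : m + q < n.+1 by lia.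
  have := no_break_in (Ordinal mq_lt); rewrite inE /= window_q eqxx.
  by move/contraTN => /(_ isT); rewrite mq_n.
have K2_gt0 : 0 < 2 * K by lia.
have run := run_in_component K2_gt0 no_break.
have [t t_root comp_t] : exists2 t, tedge t root & same_comp root (node (vtx m)) t.
  apply: component_neighbour (tcd_tree D) _.
  by have /andP[out_m _] := run 0 (leq0n _); rewrite node_ofN -[m]addn0.
have inj : injective (fun q : 'I_L => vtx (m + q)).
  move=> q1 q2 /(congr1 val) /= E; apply: val_inj; move: E.
  have := ltn_ord q1; have := ltn_ord q2; rewrite /m /L in window_le * => q1_lt q2_lt.
  by rewrite !fan_vtxK; [exact: addnI|lia|lia].
have sub : [set vtx (m + q) | q : 'I_L] \subset branch t.
  apply/subsetP => v /imsetP[q _ ->]; rewrite inE.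
  have q_le : q <= 2 * K by have := ltn_ord q; lia.
  have /andP[out_q comp_q] := run q q_le.
  rewrite same_comp_sym in comp_q.
  by rewrite node_ofN out_q; apply: connect_trans comp_q comp_t.
have := leq_trans (subset_leq_card sub) (branch_bound t_root).
by rewrite card_imset // card_ord /L; lia.
Qed.

Hypothesis fan_long : (3 * K + 1) * (2 * K + 1) <= n.

(* The [3K+1] windows each contain a break, but there are at most [3K]. *)
Lemma fan_width_absurd : False.
Proof.
have many : 3 * K + 1 <= #|breaks|.
  apply: (range_le_card (f := fun i : 'I_n.+1 => i %/ (2 * K + 1))) => j j_lt.
  have window_le : j.+1 * (2 * K + 1) <= n.
    by apply: leq_trans fan_long; rewrite leq_mul2r j_lt orbT.
  by have /exists_inP[i i_brk /eqP i_j] := window_has_break window_le; exists i.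
have := leq_trans many breaks_bound; lia.
Qed.

End FanWidth.

Lemma fan_ecw_gt (n K : nat) (D : tcd (fan_rel n)) :
  (3 * K + 1) * (2 * K + 1) <= n -> K < ecw D.
Proof.
move=> long; rewrite ltnNge; apply/negP => width_le.
exact: fan_width_absurd width_le long.
Qed.

Theorem lemma3p16 (k : nat) (hk : (3 <= k)%N) :
  ecrw_ge (fan_rel (6 * k ^ 2 - 6 * k - 1)) k.
Proof.
move=> D; case: k hk D => [|K] // hK D.
by apply: fan_ecw_gt; nia.
Qed.
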